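(* Let $\Omega\subset\mathbb R^2$ be a smooth, bounded domain, $d_i,\chi,\lambda_i,\mu_i,a_i,b_i>0$ ($i\in\{1,2,3\}$), $0\le u_0,v_0\in\bigcup_{\theta>2}W^{1,\theta}(\Omega)$, $0\le w_0\in C^0(\overline\Omega)$, and let $(u,v,w)$ be the nonnegative, unique maximal classical solution on $\overline\Omega\times[0,T_{\max})$, $T_{\max}\in(0,\infty]$, of $$\begin{cases} u_t = d_1 \Delta u + u(\lambda_1 - \mu_1 u - a_1 v - a_2 w),\\ v_t = d_2 \Delta v + v(\lambda_2 - \mu_2 v + b_1 u - a_3 w),\\ w_t = d_3 \Delta w - \chi \nabla\cdot(w \nabla(uv)) + w(\lambda_3 - \mu_3 w + b_2 u + b_3 v) & \text{in } \Omega\times(0,T_{\max}),\\ \partial_\nu u = \partial_\nu v = \partial_\nu w = 0 & \text{on } \partial\Omega\times(0,T_{\max}),\\ u(\cdot,0)=u_0,\ v(\cdot,0)=v_0,\ w(\cdot,0)=w_0. \end{cases}$$ Then there is $C>0$ such that $\|u\|_{L^\infty(\Omega\times(0,T_{\max}))}\le C$ and $\|v\|_{L^\infty(\Omega\times(0,T_{\max}))}\le C$.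
   Context: The maximal classical solution belongs to $(C^{2,1}(\overline\Omega\times[0,T_{\max})))^3\cap C^0([0,T_{\max});W^{1,\theta}(\Omega)\times W^{1,\theta}(\Omega)\times C^0(\overline\Omega))$ for some $\theta>2$; its existence and uniqueness is established in the paper. $\nu$ is the outward unit normal. *)

From mathcomp Require Import all_boot all_order all_algebra.
From mathcomp Require Import all_classical all_reals all_analysis.
Import Order.TTheory GRing.Theory Num.Theory numFieldNormedType.Exports.

Set Implicit Arguments.
Unset Strict Implicit.
Unset Printing Implicit Defensive.

Local Open Scope classical_set_scope.
Local Open Scope ring_scope.

Section PDEDefs.
Variable R : realType.

Definition dx (g : R -> R -> R) : R -> R -> R :=
  fun x y => derive1 (fun s => g s y) x.
Definition dy (g : R -> R -> R) : R -> R -> R :=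
  fun x y => derive1 (fun s => g x s) y.

Definition iter_d (s : seq bool) (g : R -> R -> R) : R -> R -> R :=
  foldr (fun b h => if b then dx h else dy h) g s.

Definition smooth2 (g : R -> R -> R) : Prop :=
  forall s : seq bool,
    (forall x y, derivable (fun r => iter_d s g r y) x 1 /\
                 derivable (fun r => iter_d s g x r) y 1) /\
    continuous (fun p : R * R => iter_d s g p.1 p.2).

(* rho is a smooth global defining function of Omega:
   Omega = {rho < 0} and grad rho <> 0 on {rho = 0} = boundary of Omega.
   The outward unit normal at a boundary point is grad rho / |grad rho|. *)
Definition defining_function (Omega : set (R * R)) (rho : R -> R -> R) : Prop :=
  smooth2 rho /\
  (forall p : R * R, Omega p <-> rho p.1 p.2 < 0) /\
  (forall p : R * R, rho p.1 p.2 = 0 ->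
     dx rho p.1 p.2 != 0 \/ dy rho p.1 p.2 != 0).

Definition smooth_bounded_domain (Omega : set (R * R)) : Prop :=
  Omega !=set0 /\ open Omega /\ connected Omega /\ bounded_set Omega /\
  exists rho, defining_function Omega rho.

Definition leb2 := ((@lebesgue_measure R) \x (@lebesgue_measure R))%E.

Definition uncurry2 (g : R -> R -> R) : R * R -> R := fun p => g p.1 p.2.

Definition Lp_fin (Omega : set (R * R)) (theta : R) (g : R -> R -> R) : Prop :=
  measurable_fun Omega (uncurry2 g) /\
  (\int[leb2]_(p in Omega) ((`|g p.1 p.2| `^ theta)%:E) < +oo)%E.

Definition test_fun (Omega : set (R * R)) (phi : R -> R -> R) : Prop :=
  smooth2 phi /\
  exists K : set (R * R), compact K /\ K `<=` Omega /\
    (forall p, ~ K p -> phi p.1 p.2 = 0).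

Definition weak_grad (Omega : set (R * R)) (f g1 g2 : R -> R -> R) : Prop :=
  forall phi, test_fun Omega phi ->
    (\int[leb2]_(p in Omega) ((f p.1 p.2 * dx phi p.1 p.2)%:E) =
       - \int[leb2]_(p in Omega) ((g1 p.1 p.2 * phi p.1 p.2)%:E))%E /\
    (\int[leb2]_(p in Omega) ((f p.1 p.2 * dy phi p.1 p.2)%:E) =
       - \int[leb2]_(p in Omega) ((g2 p.1 p.2 * phi p.1 p.2)%:E))%E.

Definition W1_with_grad (Omega : set (R * R)) (theta : R)
    (f g1 g2 : R -> R -> R) : Prop :=
  Lp_fin Omega theta f /\ Lp_fin Omega theta g1 /\ Lp_fin Omega theta g2 /\
  weak_grad Omega f g1 g2.

Definition W1 (Omega : set (R * R)) (theta : R) (f : R -> R -> R) : Prop :=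
  exists g1 g2, W1_with_grad Omega theta f g1 g2.

Definition slice (f : R -> R -> R -> R) (t : R) : R -> R -> R :=
  fun x y => f x y t.

Definition uncurry3 (f : R -> R -> R -> R) : R * R * R -> R :=
  fun q => f q.1.1 q.1.2 q.2.

Definition Qint (Omega : set (R * R)) (T : \bar R) : set (R * R * R) :=
  [set q | Omega q.1 /\ 0 < q.2 /\ (q.2%:E < T)%E].
Definition Qcl (Omega : set (R * R)) (T : \bar R) : set (R * R * R) :=
  [set q | closure Omega q.1 /\ 0 < q.2 /\ (q.2%:E < T)%E].
Definition Qcl0 (Omega : set (R * R)) (T : \bar R) : set (R * R * R) :=
  [set q | closure Omega q.1 /\ 0 <= q.2 /\ (q.2%:E < T)%E].

Definition px (f : R -> R -> R -> R) : R -> R -> R -> R :=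
  fun x y t => derive1 (fun s => f s y t) x.
Definition py (f : R -> R -> R -> R) : R -> R -> R -> R :=
  fun x y t => derive1 (fun s => f x s t) y.
Definition pt (f : R -> R -> R -> R) : R -> R -> R -> R :=
  fun x y t => derive1 (fun s => f x y s) t.

Definition lap (f : R -> R -> R -> R) : R -> R -> R -> R :=
  fun x y t => px (px f) x y t + py (py f) x y t.

Definition cont_ext (Omega : set (R * R)) (T : \bar R)
    (g G : R -> R -> R -> R) : Prop :=
  {within Qcl Omega T, continuous (uncurry3 G)} /\
  (forall q, Qint Omega T q -> uncurry3 G q = uncurry3 g q).

Definition has_cont_ext (Omega : set (R * R)) (T : \bar R)
    (g : R -> R -> R -> R) : Prop :=
  exists G, cont_ext Omega T g G.

Definition C21 (Omega : set (R * R)) (T : \bar R) (f : R -> R -> R -> R) : Prop :=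
  (forall x y t, Qint Omega T ((x, y), t) ->
     derivable (fun s => f s y t) x 1 /\ derivable (fun s => f x s t) y 1 /\
     derivable (fun s => f x y s) t 1 /\
     derivable (fun s => px f s y t) x 1 /\ derivable (fun s => px f x s t) y 1 /\
     derivable (fun s => py f s y t) x 1 /\ derivable (fun s => py f x s t) y 1) /\
  has_cont_ext Omega T f /\
  has_cont_ext Omega T (px f) /\ has_cont_ext Omega T (py f) /\
  has_cont_ext Omega T (pt f) /\
  has_cont_ext Omega T (px (px f)) /\ has_cont_ext Omega T (py (px f)) /\
  has_cont_ext Omega T (px (py f)) /\ has_cont_ext Omega T (py (py f)).

(* homogeneous Neumann condition d_nu f = 0 on boundary(Omega) x (0,T), the
   normal derivative being computed from the continuous extension of grad f;
   nu is parallel to grad rho for any defining function rho *)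
Definition neumann (Omega : set (R * R)) (T : \bar R) (f : R -> R -> R -> R) : Prop :=
  forall rho G1 G2, defining_function Omega rho ->
    cont_ext Omega T (px f) G1 -> cont_ext Omega T (py f) G2 ->
    forall x y t, rho x y = 0 -> 0 < t -> (t%:E < T)%E ->
      G1 x y t * dx rho x y + G2 x y t * dy rho x y = 0.

Definition C0W1 (Omega : set (R * R)) (T : \bar R) (theta : R)
    (f : R -> R -> R -> R) : Prop :=
  exists G1 G2 : R -> R -> R -> R,
    (forall t, 0 <= t -> (t%:E < T)%E ->
       W1_with_grad Omega theta (slice f t) (slice G1 t) (slice G2 t)) /\
    (forall t0, 0 <= t0 -> (t0%:E < T)%E ->
       (fun t => \int[leb2]_(p in Omega)
           ((`|f p.1 p.2 t - f p.1 p.2 t0| `^ theta +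
             `|G1 p.1 p.2 t - G1 p.1 p.2 t0| `^ theta +
             `|G2 p.1 p.2 t - G2 p.1 p.2 t0| `^ theta)%:E))%E
         @ within [set t | 0 <= t /\ (t%:E < T)%E] (nbhs t0) --> 0%E).

Definition is_classical_solution (Omega : set (R * R))
    (d1 d2 d3 chi l1 l2 l3 m1 m2 m3 a1 a2 a3 b1 b2 b3 : R)
    (u0 v0 w0 : R -> R -> R) (T : \bar R) (u v w : R -> R -> R -> R) : Prop :=
  C21 Omega T u /\ C21 Omega T v /\ C21 Omega T w /\
  {within Qcl0 Omega T, continuous (uncurry3 u)} /\
  {within Qcl0 Omega T, continuous (uncurry3 v)} /\
  {within Qcl0 Omega T, continuous (uncurry3 w)} /\
  (exists theta, 2 < theta /\ C0W1 Omega T theta u /\ C0W1 Omega T theta v) /\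
  (forall x y t, Qint Omega T ((x, y), t) ->
     pt u x y t = d1 * lap u x y t +
       u x y t * (l1 - m1 * u x y t - a1 * v x y t - a2 * w x y t) /\
     pt v x y t = d2 * lap v x y t +
       v x y t * (l2 - m2 * v x y t + b1 * u x y t - a3 * w x y t) /\
     pt w x y t = d3 * lap w x y t
       - chi * (px (fun x' y' t' => w x' y' t' * px (fun a b c => u a b c * v a b c) x' y' t') x y t
                + py (fun x' y' t' => w x' y' t' * py (fun a b c => u a b c * v a b c) x' y' t') x y t)
       + w x y t * (l3 - m3 * w x y t + b2 * u x y t + b3 * v x y t)) /\
  neumann Omega T u /\ neumann Omega T v /\ neumann Omega T w /\
  (forall p : R * R, closure Omega p ->
     u p.1 p.2 0 = u0 p.1 p.2 /\ v p.1 p.2 0 = v0 p.1 p.2 /\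
     w p.1 p.2 0 = w0 p.1 p.2).

Definition is_maximal_solution (Omega : set (R * R))
    (d1 d2 d3 chi l1 l2 l3 m1 m2 m3 a1 a2 a3 b1 b2 b3 : R)
    (u0 v0 w0 : R -> R -> R) (T : \bar R) (u v w : R -> R -> R -> R) : Prop :=
  is_classical_solution Omega d1 d2 d3 chi l1 l2 l3 m1 m2 m3 a1 a2 a3 b1 b2 b3
    u0 v0 w0 T u v w /\
  ~ (exists (T' : \bar R) (u' v' w' : R -> R -> R -> R), (T < T')%E /\
       is_classical_solution Omega d1 d2 d3 chi l1 l2 l3 m1 m2 m3 a1 a2 a3 b1 b2 b3
         u0 v0 w0 T' u' v' w' /\
       (forall q, Qcl0 Omega T q ->
          uncurry3 u' q = uncurry3 u q /\ uncurry3 v' q = uncurry3 v q /\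
          uncurry3 w' q = uncurry3 w q)).

End PDEDefs.

From mathcomp Require Import all_boot all_order all_algebra.
From mathcomp Require Import all_classical all_reals all_analysis.
From mathcomp Require Import ring lra.
Import Order.TTheory GRing.Theory Num.Theory numFieldNormedType.Exports.

(** Since [a1 v + a2 w >= 0], [u] is a nonnegative Neumann subsolution of the
  logistic equation [z_t = d1 Lap z + z (l1 - m1 z)]; once [u <= Mu] is known,
  [v] is one of [z_t = d2 Lap z + z (l2 + b1 Mu - m2 z)].  Such a subsolution
  stays below [max (sup z(.,0)) (lam / mu)]: take a defining function [rho] of
  the domain and, on [closure Omega * [0, t0]], maximise
  [z - eps rho - eps K t] with [K >= d Lap rho].  At a boundary maximum the
  Neumann condition makes [grad (z - eps rho) . grad rho = - eps |grad rho|^2 < 0],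
  so moving inwards along a coordinate line increases the function; at an
  interior maximum with [z > lam / mu] the equation gives
  [eps K <= z_t <= d Lap z + z (lam - mu z) < eps d Lap rho <= eps K].  Hence
  [z(t0) <= max (sup z(.,0)) (lam / mu) + eps (sup (- rho) + K t0)] for every
  [eps > 0]. *)

Set Implicit Arguments.
Unset Strict Implicit.
Unset Printing Implicit Defensive.

Local Open Scope classical_set_scope.
Local Open Scope ring_scope.

Section real_calculus.
Variable R : realType.
Implicit Types (f g phi Df : R -> R) (a d r t D : R).

Lemma exists_pos_lt2 (m d : R) : 0 < m -> 0 < d -> exists2 k : R, 0 < k & k < m /\ k < d.
Proof.
move=> m0 d0; have k0 : 0 < Num.min m d by rewrite lt_min m0.
have km : Num.min m d <= m by rewrite ge_min lexx.
have kd : Num.min m d <= d by rewrite ge_min lexx orbT.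
by exists (Num.min m d / 2); [|split]; lra.
Qed.

Lemma is_derive_quotient_sign f a D : is_derive a 1 f D -> D != 0 ->
  exists2 m : R, 0 < m &
    forall h, h != 0 -> `|h| < m -> 0 < (f (a + h) - f a) / h * D.
Proof.
move=> fD D0.
have : (fun h : R => h^-1 *: ((f \o shift a) (h *: 1) - f a)) @ 0^' --> D.
  by case: fD => fa <-; exact: fa.
move=> /cvgrPdist_lt /(_ `|D|); rewrite normr_gt0 => /(_ D0).
rewrite near_withinE => /nbhs_ballP [m /= m0 hm]; exists m => // h h0 hmh.
set q := (f (a + h) - f a) / h.
have qE : h^-1 *: ((f \o shift a) h%:A - f a) = q.
  by rewrite /q /= /GRing.scale /= mulr1 (addrC h) mulrC.
have := hm h; rewrite -ball_normE /= sub0r normrN qE => /(_ hmh h0).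
rewrite ltr_norml => /andP[lo hi].
case: (ltgtP D 0) lo hi => [Dn|Dp|D_0]; last by rewrite D_0 eqxx in D0.
- by rewrite ltr0_norm //; nra.
- by rewrite gtr0_norm //; nra.
Qed.

Lemma derive_ge0_at_left_max f t D d : is_derive t 1 f D -> 0 < d ->
  (forall s, t - d < s -> s < t -> f s <= f t) -> 0 <= D.
Proof.
move=> fD d0 tmax; rewrite leNgt; apply/negP => D0.
have [m m0 hm] := is_derive_quotient_sign fD (ltr0_neq0 D0).
have [k k0 [km kd]] := exists_pos_lt2 m0 d0.
have := hm (- k); rewrite oppr_eq0 normrN gtr0_norm // (gt_eqF k0) => /(_ isT km).
have fk : f (t - k) - f t <= 0 by rewrite subr_le0; apply: tmax; lra.
have : 0 <= (f (t - k) - f t) / - k by rewrite mulr_le0 // invr_le0 oppr_le0 ltW.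
nra.
Qed.

Lemma derive2_le0_at_local_max f Df a (D2 : R) :
  (\forall r \near a, is_derive (r : R) 1 f (Df r)) -> is_derive a 1 Df D2 ->
  (\forall r \near a, f r <= f a) -> D2 <= 0.
Proof.
move=> fD DfD amax.
have /nbhs_ballP[d /= d0 hd] : \forall r \near a, is_derive (r : R) 1 f (Df r) /\ f r <= f a.
  exact: filterI.
have near_a r : a - d < r -> r < a + d -> is_derive r 1 f (Df r) /\ f r <= f a.
  by move=> ? ?; apply: hd; rewrite -ball_normE /= ltr_norml; apply/andP; split; lra.
have Dfa : Df a = 0.
  have fD0 : is_derive a 1 f 0.
    apply: (derive1_at_max (a := a - d) (b := a + d)).
    - lra.
    - by move=> r /[!in_itv]/= /andP[? ?]; case: (near_a r).
    - by rewrite in_itv /=; apply/andP; split; lra.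
    - by move=> r /[!in_itv]/= /andP[? ?]; case: (near_a r).
  by case: (near_a a ltac:(lra) ltac:(lra)) => -[_ <-] _; case: fD0.
rewrite leNgt; apply/negP => D2pos.
have [m m0 hm] := is_derive_quotient_sign DfD (lt0r_neq0 D2pos).
have [k k0 [km kd]] := exists_pos_lt2 m0 d0.
have fD' r : r \in `]a, a + k[ -> is_derive r 1 f (Df r).
  by move=> /[!in_itv]/= /andP[? ?]; case: (near_a r); try lra.
have fcont : {within `[a, a + k], continuous f}.
  apply: derivable_within_continuous => r /[!in_itv]/= /andP[? ?].
  by case: (near_a r) => [||[]]; try lra.
have [c] := MVT (ltac:(lra) : a < a + k) fD' fcont.
rewrite in_itv /= => /andP[c1 c2] fE.
have := hm (c - a); rewrite subr_eq0 (gt_eqF c1) gtr0_norm ?subr_gt0 // subrKC Dfa subr0.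
move=> /(_ isT ltac:(lra)); rewrite pmulr_lgt0 // pmulr_lgt0 ?invr_gt0 ?subr_gt0 // => Dc.
have : f (a + k) <= f a by case: (near_a (a + k)); lra.
have : 0 < Df c * (a + k - a) by rewrite mulr_gt0 //; lra.
lra.
Qed.

Lemma is_derive_root_side phi a (Dphi : R) :
  phi a = 0 -> is_derive a 1 phi Dphi -> Dphi != 0 ->
  exists2 k : R, 0 < k &
    forall r, 0 < `|r - a| <= k -> (r - a) * Dphi < 0 -> phi r < 0.
Proof.
move=> phia phiD Dphi0; have [m m0 hm] := is_derive_quotient_sign phiD Dphi0.
exists (m / 2) => [|r]; first by rewrite divr_gt0.
rewrite normr_gt0 => /andP[ra rak] rD.
have := hm (r - a) ra ltac:(lra); rewrite subrKC phia subr0.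
have -> : phi r / (r - a) * Dphi = phi r * ((r - a) * Dphi) / (r - a) ^+ 2 by field.
by rewrite pmulr_lgt0 ?invr_gt0 ?exprn_even_gt0 // nmulr_lgt0.
Qed.

Lemma boundary_not_max f phi Df (C : set R) a (Dphi : R) :
  phi a = 0 -> is_derive a 1 phi Dphi -> C a ->
  (forall r, phi r < 0 -> C r) -> (forall r, phi r < 0 -> is_derive r 1 f (Df r)) ->
  {within C, continuous f} -> {within C, continuous Df} -> Df a * Dphi < 0 ->
  exists2 r, C r & f a < f r.
Proof.
move=> phia phiD Ca phiC fD fcont Dfcont Dfa.
have Dphi0 : Dphi != 0 by apply: contraTneq Dfa => ->; rewrite mulr0 ltxx.
have : \forall r \near within C (nbhs a), Df r * Dphi < 0.
  have cDf : (fun r => Df r * Dphi) @ within C (nbhs a) --> Df a * Dphi.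
    apply: cvgM; last exact: cvg_cst.
    by rewrite (nbhs_subspace_in Ca); exact: Dfcont.
  exact: cvgr_lt cDf _ Dfa.
rewrite near_withinE => /nbhs_ballP[e /= e0 he].
have [m m0 phi_side] := is_derive_root_side phia phiD Dphi0.
have [k k0 [km ke]] := exists_pos_lt2 m0 e0.
have phi_lt0 r : 0 < `|r - a| <= k -> (r - a) * Dphi < 0 -> phi r < 0.
  by move=> /andP[ra rak]; apply: phi_side; rewrite ra /=; lra.
have Df_sgn r : `|r - a| < e -> C r -> Df r * Dphi < 0.
  by move=> ra; apply: he; rewrite -ball_normE /= distrC.
case: (ltgtP Dphi 0) => [Dn|Dp|D0]; last by rewrite D0 eqxx in Dphi0.
- have phi_right r : a < r -> r <= a + k -> phi r < 0.
    move=> ? ?; apply: phi_lt0; last by nra.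
    by rewrite gtr0_norm ?subr_gt0 //; apply/andP; split; lra.
  have sub : `[a, a + k] `<=` C.
    move=> r /=; rewrite in_itv /= => /andP[r1 r2].
    by have [<-//|ar] := eqVneq a r; apply/phiC/phi_right => //; rewrite lt_neqAle ar.
  have fD' r : r \in `]a, a + k[ -> is_derive r 1 f (Df r).
    by rewrite in_itv /= => /andP[? ?]; apply/fD/phi_right; lra.
  have [c] := MVT (ltac:(lra) : a < a + k) fD' (continuous_subspaceW sub fcont).
  rewrite in_itv /= => /andP[c1 c2] fE.
  have := Df_sgn c; rewrite ltr_norml => /(_ ltac:(apply/andP; split; lra)).
  move=> /(_ (phiC _ (phi_right _ c1 (ltW c2)))) Dc.
  exists (a + k); last by nra.
  by apply: sub; rewrite /= in_itv /=; apply/andP; split; lra.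
- have phi_left r : a - k <= r -> r < a -> phi r < 0.
    move=> ? ?; apply: phi_lt0; last by nra.
    by rewrite ltr0_norm ?subr_lt0 //; apply/andP; split; lra.
  have sub : `[a - k, a] `<=` C.
    move=> r /=; rewrite in_itv /= => /andP[r1 r2].
    by have [->//|ra] := eqVneq r a; apply/phiC/phi_left => //; rewrite lt_neqAle ra.
  have fD' r : r \in `]a - k, a[ -> is_derive r 1 f (Df r).
    by rewrite in_itv /= => /andP[? ?]; apply/fD/phi_left; lra.
  have [c] := MVT (ltac:(lra) : a - k < a) fD' (continuous_subspaceW sub fcont).
  rewrite in_itv /= => /andP[c1 c2] fE.
  have := Df_sgn c; rewrite ltr_norml => /(_ ltac:(apply/andP; split; lra)).
  move=> /(_ (phiC _ (phi_left _ (ltW c1) c2))) Dc.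
  exists (a - k); last by nra.
  by apply: sub; rewrite /= in_itv /=; apply/andP; split; lra.
Qed.

Lemma derivable_is_derive1 f r : derivable f r 1 -> is_derive r 1 f (derive1 f r).
Proof. by move=> fr; rewrite derive1E; exact: derivableP. Qed.

Lemma is_derive_subZ f g r (e Df Dg : R) :
  is_derive r 1 f Df -> is_derive r 1 g Dg ->
  is_derive r 1 (fun s => f s - e * g s) (Df - e * Dg).
Proof. by move=> fD gD; exact: (is_deriveB fD (is_deriveZ e gD)). Qed.

End real_calculus.

Lemma continuous_within_comp (T U V : topologicalType) (A : set T) (B : set U)
    (phi : T -> U) (g : U -> V) :
  continuous phi -> phi @` A `<=` B -> {within B, continuous g} ->
  {within A, continuous (g \o phi)}.
Proof.
move=> cphi AB cg; rewrite continuous_subspace_in => x /set_mem Ax.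
have Bx : B (phi x) by apply: AB; exists x.
apply: (cvg_comp phi g _ (cg (phi x))); rewrite /= -(nbhs_subspace_in Ax).
apply/(subspace_cvgP _ Bx) => W /=.
move=> BW; have sub : phi @^-1` (fun y => B y -> W y) `<=` (fun z => A z -> W (phi z)).
  by move=> z BWz Az; apply/BWz/AB; exists z.
exact: (filterS sub (cphi x _ BW)).
Qed.

Lemma continuous_pairl (T U : topologicalType) (b : U) : continuous (fun x : T => (x, b)).
Proof. by move=> x; apply: cvg_pair; [exact: cvg_id | exact: cvg_cst]. Qed.
Arguments continuous_pairl {T U} b.

Lemma continuous_pairr (T U : topologicalType) (a : T) : continuous (fun y : U => (a, y)).
Proof. by move=> y; apply: cvg_pair; [exact: cvg_cst | exact: cvg_id]. Qed.
Arguments continuous_pairr {T U} a.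

Lemma compact_continuous_bounded (R : realType) (T : topologicalType) (A : set T) (g : T -> R) :
  A !=set0 -> compact A -> {within A, continuous g} ->
  exists2 B : R, 0 <= B & forall p, A p -> `|g p| <= B.
Proof.
move=> A0 cA cg.
have cn : {within A, continuous (Num.norm \o g)}.
  by apply: within_continuous_comp => // y _; exact: norm_continuous.
have [c Ac cmax] := compact_EVT_max A0 cA cn.
by exists `|g c| => // p Ap; apply: cmax; rewrite inE.
Qed.

Lemma bounded_closure_compact (R : realType) (A : set (R * R)) :
  bounded_set A -> compact (closure A).
Proof.
case=> M [_ /(_ (M + 1) ltac:(lra)) AM].
set B := M + 1 in AM.
have cbox : compact ([set` `[-B, B]] `*` [set` `[-B, B]]).
  by apply: compact_setX; exact: segment_compact.
have clbox := compact_closed (@norm_hausdorff _ _) cbox.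
apply: subclosed_compact cbox _; first exact: closed_closure.
rewrite closureE; apply: smallest_sub => // p /AM /=.
rewrite ge_max => /andP[p1 p2].
by split; rewrite /= in_itv /= -ler_norml.
Qed.

Lemma within_continuous_subZ (R : realType) (T : topologicalType) (A : set T)
    (g h : T -> R) (e : R) :
  {within A, continuous g} -> continuous h ->
  {within A, continuous (fun x => g x - e * h x)}.
Proof.
move=> gc hc x; apply: cvgB; first exact: gc.
by apply: cvgM; [exact: cvg_cst | exact: continuous_subspaceT].
Qed.

Section defining_function.
Variables (R : realType) (Omega : set (R * R)) (rho : R -> R -> R).
Implicit Types (s : seq bool) (x y r : R) (p : R * R).

Section smooth.
Hypothesis rho_smooth : smooth2 rho.

Lemma smooth2_is_derive_x s x y :
  is_derive x 1 (fun r => iter_d s rho r y) (dx (iter_d s rho) x y).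
Proof. exact: derivable_is_derive1 ((rho_smooth s).1 x y).1. Qed.

Lemma smooth2_is_derive_y s x y :
  is_derive y 1 (fun r => iter_d s rho x r) (dy (iter_d s rho) x y).
Proof. exact: derivable_is_derive1 ((rho_smooth s).1 x y).2. Qed.

End smooth.

Hypothesis rhoOmega : defining_function Omega rho.

Lemma defining_function_le0 p : closure Omega p -> rho p.1 p.2 <= 0.
Proof.
case: rhoOmega => rho_smooth [] Omega_rho _.
have rhoc : continuous (fun p : R * R => rho p.1 p.2) := (rho_smooth [::]).2.
have cl := (continuous_closedP _).1 rhoc _ (@closed_le _ 0).
suff : closure Omega `<=` (fun p => rho p.1 p.2) @^-1` [set x | x <= 0] by apply.
by rewrite closureE; apply: smallest_sub cl _ => q /Omega_rho /ltW.
Qed.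

Lemma defining_function_boundary p : closure Omega p -> ~ Omega p -> rho p.1 p.2 = 0.
Proof.
move=> cp nOp; apply/eqP; rewrite eq_le defining_function_le0 //=.
by rewrite leNgt; apply/negP => /rhoOmega.2.1.
Qed.

Lemma boundary_line_not_max (psi dpsi : R * R -> R) (l : R -> R * R) (r0 drho : R) :
  continuous l -> closure Omega (l r0) -> rho (l r0).1 (l r0).2 = 0 ->
  is_derive r0 1 (fun r => rho (l r).1 (l r).2) drho ->
  (forall r, Omega (l r) -> is_derive r 1 (psi \o l) (dpsi (l r))) ->
  {within closure Omega, continuous psi} -> {within closure Omega, continuous dpsi} ->
  dpsi (l r0) * drho < 0 ->
  exists2 r, closure Omega (l r) & psi (l r0) < psi (l r).
Proof.
move=> lc clr0 rhor0 rhoD psiD psic dpsic dpsi_neg.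
have Omega_rho := rhoOmega.2.1.
have l_closure : l @` (fun r => closure Omega (l r)) `<=` closure Omega by move=> _ [r ? <-].
apply: (boundary_not_max (phi := fun r => rho (l r).1 (l r).2) (Df := dpsi \o l)) => //.
- by move=> r /(Omega_rho (l r)).2 /subset_closure.
- by move=> r /(Omega_rho (l r)).2; exact: psiD.
- exact: continuous_within_comp lc l_closure psic.
- exact: continuous_within_comp lc l_closure dpsic.
Qed.

End defining_function.

Definition logistic_subsolution (R : realType) (Omega : set (R * R)) (T : \bar R)
    (d lam mu : R) (f : R -> R -> R -> R) : Prop :=
  forall x y t, Qint Omega T ((x, y), t) ->
    pt f x y t <= d * lap f x y t + f x y t * (lam - mu * f x y t).

Lemma logistic_subsolution_of_rate (R : realType) (Omega : set (R * R)) (T : \bar R)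
    (d lam mu : R) (f g : R -> R -> R -> R) :
  (forall x y t, Qint Omega T ((x, y), t) -> 0 <= f x y t) ->
  (forall x y t, Qint Omega T ((x, y), t) ->
     pt f x y t = d * lap f x y t + f x y t * g x y t) ->
  (forall x y t, Qint Omega T ((x, y), t) -> g x y t <= lam - mu * f x y t) ->
  logistic_subsolution Omega T d lam mu f.
Proof.
move=> f0 fpde grate x y t Q; rewrite fpde // lerD2l.
by apply: ler_wpM2l; [exact: f0 | exact: grate].
Qed.

Section logistic_max_principle.
Variables (R : realType) (Omega : set (R * R)) (T : \bar R) (f : R -> R -> R -> R).
Implicit Types (x y t a b ts : R).
Hypothesis fC21 : C21 Omega T f.

Lemma C21_is_derive_x x y t : Qint Omega T ((x, y), t) ->
  is_derive x 1 (fun r => f r y t) (px f x y t).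
Proof. by case/fC21.1 => fx _; exact: derivable_is_derive1. Qed.

Lemma C21_is_derive_y x y t : Qint Omega T ((x, y), t) ->
  is_derive y 1 (fun r => f x r t) (py f x y t).
Proof. by case/fC21.1 => _ [fy _]; exact: derivable_is_derive1. Qed.

Lemma C21_is_derive_t x y t : Qint Omega T ((x, y), t) ->
  is_derive t 1 (fun s => f x y s) (pt f x y t).
Proof. by case/fC21.1 => _ [_ [ft _]]; exact: derivable_is_derive1. Qed.

Lemma C21_is_derive_xx x y t : Qint Omega T ((x, y), t) ->
  is_derive x 1 (fun r => px f r y t) (px (px f) x y t).
Proof. by case/fC21.1 => _ [_ [_ [fxx _]]]; exact: derivable_is_derive1. Qed.

Lemma C21_is_derive_yy x y t : Qint Omega T ((x, y), t) ->
  is_derive y 1 (fun r => py f x r t) (py (py f) x y t).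
Proof. by case/fC21.1 => _ [_ [_ [_ [_ [_ fyy]]]]]; exact: derivable_is_derive1. Qed.

Variable rho : R -> R -> R.
Hypothesis rhoOmega : defining_function Omega rho.
Hypothesis oOmega : open Omega.

Lemma dxx_le_at_spatial_max eps a b ts : Omega (a, b) -> 0 < ts -> (ts%:E < T)%E ->
  (forall r, Omega (r, b) -> f r b ts - eps * rho r b <= f a b ts - eps * rho a b) ->
  px (px f) a b ts <= eps * dx (dx rho) a b.
Proof.
move=> Oab ts0 tsT amax; have rho_smooth := rhoOmega.1.
have Or : \forall r \near a, Omega (r, b).
  exact: continuous_pairl b a _ (open_nbhs_nbhs (conj oOmega Oab)).
rewrite -subr_le0; apply: (derive2_le0_at_local_max
  (f := fun r => f r b ts - eps * rho r b) (Df := fun r => px f r b ts - eps * dx rho r b)).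
- apply: filterS Or => r Or; apply: is_derive_subZ.
    exact: C21_is_derive_x.
  exact: (smooth2_is_derive_x rho_smooth [::]).
- apply: is_derive_subZ; first exact: C21_is_derive_xx.
  exact: (smooth2_is_derive_x rho_smooth [:: true]).
- by apply: filterS Or => r; exact: amax.
Qed.

Lemma dyy_le_at_spatial_max eps a b ts : Omega (a, b) -> 0 < ts -> (ts%:E < T)%E ->
  (forall r, Omega (a, r) -> f a r ts - eps * rho a r <= f a b ts - eps * rho a b) ->
  py (py f) a b ts <= eps * dy (dy rho) a b.
Proof.
move=> Oab ts0 tsT bmax; have rho_smooth := rhoOmega.1.
have Or : \forall r \near b, Omega (a, r).
  exact: continuous_pairr a b _ (open_nbhs_nbhs (conj oOmega Oab)).
rewrite -subr_le0; apply: (derive2_le0_at_local_max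
  (f := fun r => f a r ts - eps * rho a r) (Df := fun r => py f a r ts - eps * dy rho a r)).
- apply: filterS Or => r Or; apply: is_derive_subZ.
    exact: C21_is_derive_y.
  exact: (smooth2_is_derive_y rho_smooth [::]).
- apply: is_derive_subZ; first exact: C21_is_derive_yy.
  exact: (smooth2_is_derive_y rho_smooth [:: false]).
- by apply: filterS Or => r; exact: bmax.
Qed.

Lemma dt_ge_at_time_max c a b ts : Omega (a, b) -> 0 < ts -> (ts%:E < T)%E ->
  (forall s, 0 < s -> s < ts -> f a b s - c * s <= f a b ts - c * ts) ->
  c <= pt f a b ts.
Proof.
move=> Oab ts0 tsT tmax; rewrite -subr_ge0 -[c in _ - c]mulr1.
apply: (derive_ge0_at_left_max (f := fun s => f a b s - c * s) _ ts0).
- by apply: is_derive_subZ; [exact: C21_is_derive_t | exact: is_derive_id].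
- by move=> s s0 sts; apply: tmax; lra.
Qed.

Lemma interior_perturbed_max_le d lam mu eps K a b ts :
  0 < d -> 0 <= lam -> 0 < mu -> 0 < eps -> logistic_subsolution Omega T d lam mu f ->
  d * (dx (dx rho) a b + dy (dy rho) a b) <= K ->
  Omega (a, b) -> 0 < ts -> (ts%:E < T)%E ->
  (forall x y, Omega (x, y) -> f x y ts - eps * rho x y <= f a b ts - eps * rho a b) ->
  (forall s, 0 < s -> s < ts -> f a b s - eps * K * s <= f a b ts - eps * K * ts) ->
  f a b ts <= lam / mu.
Proof.
move=> d0 lam0 mu0 eps0 fsub lapK Oab ts0 tsT smax tmax.
have fxx := dxx_le_at_spatial_max Oab ts0 tsT (fun r => smax r b).
have fyy := dyy_le_at_spatial_max Oab ts0 tsT (smax a).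
have ft := dt_ge_at_time_max Oab ts0 tsT tmax.
have := fsub a b ts (conj Oab (conj ts0 tsT)); rewrite /lap => pde.
rewrite leNgt; apply/negP => f_large.
have f_pos : 0 < f a b ts by apply: le_lt_trans f_large; rewrite divr_ge0 // ltW.
have growth_neg : f a b ts * (lam - mu * f a b ts) < 0.
  by rewrite pmulr_rlt0 // subr_lt0 mulrC -ltr_pdivrMr.
have lap_le := lerD fxx fyy; rewrite -mulrDr in lap_le.
have := ler_wpM2l (ltW d0) lap_le; have := ler_wpM2l (ltW eps0) lapK.
rewrite mulrCA; lra.
Qed.

Hypothesis fcont : {within Qcl0 Omega T, continuous (uncurry3 f)}.
Hypothesis fneu : neumann Omega T f.

Lemma perturbed_flux_lt0 (G1 G2 : R -> R -> R -> R) eps a b ts :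
  cont_ext Omega T (px f) G1 -> cont_ext Omega T (py f) G2 ->
  rho a b = 0 -> 0 < eps -> 0 < ts -> (ts%:E < T)%E ->
  (G1 a b ts - eps * dx rho a b) * dx rho a b +
  (G2 a b ts - eps * dy rho a b) * dy rho a b < 0.
Proof.
move=> G1f G2f rab eps0 ts0 tsT.
have flux := fneu rhoOmega G1f G2f rab ts0 tsT.
set gx := dx rho a b in flux *; set gy := dy rho a b in flux *.
have grad_pos : 0 < gx ^+ 2 + gy ^+ 2.
  have := sqr_ge0 gx; have := sqr_ge0 gy => gy2 gx2.
  case: (rhoOmega.2.2 (a, b) rab) => /= g0.
    have : 0 < gx ^+ 2 by rewrite exprn_even_gt0 //= g0 orbT.
    lra.
  have : 0 < gy ^+ 2 by rewrite exprn_even_gt0 //= g0 orbT.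
  lra.
have : 0 < eps * (gx ^+ 2 + gy ^+ 2) by exact: mulr_gt0.
by rewrite !expr2; lra.
Qed.

Lemma perturbed_max_not_on_boundary eps a b ts :
  closure Omega (a, b) -> ~ Omega (a, b) -> 0 < eps -> 0 < ts -> (ts%:E < T)%E ->
  (forall x y, closure Omega (x, y) ->
     f x y ts - eps * rho x y <= f a b ts - eps * rho a b) -> False.
Proof.
move=> cab nab eps0 ts0 tsT smax; have rho_smooth := rhoOmega.1.
have rab : rho a b = 0 := defining_function_boundary rhoOmega cab nab.
have [_ [_ [[G1 G1f] [[G2 G2f] _]]]] := fC21.
have flux_neg := perturbed_flux_lt0 G1f G2f rab eps0 ts0 tsT.
pose psi p := f p.1 p.2 ts - eps * rho p.1 p.2.
have to_Qcl0 : (fun p => (p, ts)) @` closure Omega `<=` Qcl0 Omega T.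
  by move=> _ [p cp <-]; split; [|split; [exact: ltW|]].
have to_Qcl : (fun p => (p, ts)) @` closure Omega `<=` Qcl Omega T.
  by move=> _ [p cp <-].
have psic : {within closure Omega, continuous psi}.
  apply: within_continuous_subZ (rho_smooth [::]).2.
  exact (continuous_within_comp (continuous_pairl ts) to_Qcl0 fcont).
have dpsic (G : R -> R -> R -> R) s : {within Qcl Omega T, continuous (uncurry3 G)} ->
    {within closure Omega,
      continuous (fun p => G p.1 p.2 ts - eps * iter_d s rho p.1 p.2)}.
  move=> Gc; apply: within_continuous_subZ (rho_smooth s).2.
  exact (continuous_within_comp (continuous_pairl ts) to_Qcl Gc).
have ext_eq (G g : R -> R -> R -> R) x y : cont_ext Omega T g G -> Omega (x, y) ->
    G x y ts = g x y ts.
  by move=> [_ Gg] Oxy; exact: (Gg ((x, y), ts) (conj Oxy (conj ts0 tsT))).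
case: (ltP ((G1 a b ts - eps * dx rho a b) * dx rho a b) 0) => [x_neg | x_nneg].
- have psiD r : Omega (r, b) -> is_derive r 1 (fun r => psi (r, b))
      (G1 r b ts - eps * dx rho r b).
    move=> Orb; rewrite (ext_eq _ _ _ _ G1f Orb); apply: is_derive_subZ.
      exact: C21_is_derive_x.
    exact: (smooth2_is_derive_x rho_smooth [::]).
  have [r crb] := boundary_line_not_max rhoOmega (continuous_pairl b) cab rab
    (smooth2_is_derive_x rho_smooth [::] a b) psiD psic (dpsic G1 [:: true] G1f.1) x_neg.
  by rewrite /psi /= ltNge smax.
- have y_neg : (G2 a b ts - eps * dy rho a b) * dy rho a b < 0 by lra.
  have psiD r : Omega (a, r) -> is_derive r 1 (fun r => psi (a, r))
      (G2 a r ts - eps * dy rho a r).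
    move=> Oar; rewrite (ext_eq _ _ _ _ G2f Oar); apply: is_derive_subZ.
      exact: C21_is_derive_y.
    exact: (smooth2_is_derive_y rho_smooth [::]).
  have [r car] := boundary_line_not_max rhoOmega (continuous_pairr a) cab rab
    (smooth2_is_derive_y rho_smooth [::] a b) psiD psic (dpsic G2 [:: false] G2f.1) y_neg.
  by rewrite /psi /= ltNge smax.
Qed.

Lemma perturbed_max_le d lam mu eps K B0 a b ts :
  0 < d -> 0 <= lam -> 0 < mu -> 0 < eps -> logistic_subsolution Omega T d lam mu f ->
  (forall p, closure Omega p -> d * (dx (dx rho) p.1 p.2 + dy (dy rho) p.1 p.2) <= K) ->
  (forall p, closure Omega p -> f p.1 p.2 0 <= B0) ->
  closure Omega (a, b) -> 0 <= ts -> (ts%:E < T)%E ->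
  (forall x y s, closure Omega (x, y) -> 0 <= s -> s <= ts ->
     f x y s - eps * rho x y - eps * K * s <= f a b ts - eps * rho a b - eps * K * ts) ->
  f a b ts <= Num.max B0 (lam / mu).
Proof.
move=> d0 lam0 mu0 eps0 fsub lapK fB0 cab ts0 tsT gmax.
rewrite le_max; apply/orP.
have [->|ts_neq0] := eqVneq ts 0; first by left; exact: (fB0 (a, b)).
right; have ts_pos : 0 < ts by rewrite lt_neqAle eq_sym ts_neq0.
have smax x y : closure Omega (x, y) ->
    f x y ts - eps * rho x y <= f a b ts - eps * rho a b.
  by move=> cxy; have := gmax x y ts cxy ts0 (lexx ts); lra.
have [Oab|nOab] := pselect (Omega (a, b)); last first.
  by case: (perturbed_max_not_on_boundary cab nOab eps0 ts_pos tsT smax).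
apply: (interior_perturbed_max_le d0 lam0 mu0 eps0 fsub (lapK (a, b) cab) Oab ts_pos tsT).
  by move=> x y Oxy; exact/smax/subset_closure.
by move=> s s0 sts; have := gmax a b s cab (ltW s0) (ltW sts); lra.
Qed.

Lemma perturbed_max_bound d lam mu eps K R0 B0 x0 y0 t0 :
  0 < d -> 0 <= lam -> 0 < mu -> 0 < eps -> 0 <= K ->
  logistic_subsolution Omega T d lam mu f ->
  (forall p, closure Omega p -> d * (dx (dx rho) p.1 p.2 + dy (dy rho) p.1 p.2) <= K) ->
  (forall p, closure Omega p -> - rho p.1 p.2 <= R0) ->
  (forall p, closure Omega p -> f p.1 p.2 0 <= B0) ->
  compact (closure Omega) -> closure Omega (x0, y0) -> 0 <= t0 -> (t0%:E < T)%E ->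
  f x0 y0 t0 <= Num.max B0 (lam / mu) + eps * (R0 + K * t0).
Proof.
move=> d0 lam0 mu0 eps0 K0 fsub lapK rhoR0 fB0 cOmega cx0 t00 t0T.
pose g q := uncurry3 f q - eps * rho q.1.1 q.1.2 - eps * K * q.2.
pose box := closure Omega `*` [set` `[0, t0]].
have box_Q : box `<=` Qcl0 Omega T.
  move=> [p s] [cp /=]; rewrite in_itv /= => /andP[s0 st0]; split => //; split => //.
  by apply: le_lt_trans t0T; rewrite lee_fin.
have rhoc : continuous (fun p : R * R => rho p.1 p.2) := (rhoOmega.1 [::]).2.
have rho_fst : continuous ((fun p : R * R => rho p.1 p.2) \o fst : R * R * R -> R).
  by move=> q; apply: continuous_comp; [exact: cvg_fst | exact: rhoc].
have gc : {within box, continuous g}.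
  apply: within_continuous_subZ; last by move=> q; exact: cvg_snd.
  exact: within_continuous_subZ (continuous_subspaceW box_Q fcont) rho_fst.
have box0 : box !=set0 by exists ((x0, y0), t0); split; rewrite //= in_itv /= t00 lexx.
have cbox : compact box by apply: compact_setX cOmega _; exact: segment_compact.
have [[[a b] ts] /set_mem [cab /=]] := compact_EVT_max box0 cbox gc.
rewrite in_itv /= => /andP[ts0 tst0] g_le.
have gmax x y s : closure Omega (x, y) -> 0 <= s -> s <= t0 ->
    g ((x, y), s) <= g ((a, b), ts).
  by move=> cxy s0 st0; apply: g_le; apply/mem_set; split; rewrite //= in_itv /= s0.
have fab : f a b ts <= Num.max B0 (lam / mu).
  apply: (perturbed_max_le d0 lam0 mu0 eps0 fsub lapK fB0 cab ts0) => [|x y s cxy s0 sts].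
    by apply: le_lt_trans t0T; rewrite lee_fin.
  have := gmax x y s cxy s0 (le_trans sts tst0); rewrite /g /uncurry3 /=; lra.
have := gmax x0 y0 t0 cx0 t00 (lexx t0); rewrite /g /uncurry3 /=.
have := ler_wpM2l (ltW eps0) (rhoR0 (a, b) cab).
have := ler_wpM2l (ltW eps0) (defining_function_le0 rhoOmega cx0).
have : 0 <= eps * K * ts by rewrite !mulr_ge0 // ltW.
rewrite /= mulr0; lra.
Qed.

End logistic_max_principle.

Lemma logistic_max_principle (R : realType) (Omega : set (R * R)) (T : \bar R)
    (f : R -> R -> R -> R) (d lam mu : R) :
  smooth_bounded_domain Omega -> (0 < T)%E -> C21 Omega T f ->
  {within Qcl0 Omega T, continuous (uncurry3 f)} -> neumann Omega T f ->
  0 < d -> 0 <= lam -> 0 < mu -> logistic_subsolution Omega T d lam mu f ->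
  exists2 M : R, 0 <= M & forall x y t, Qint Omega T ((x, y), t) -> f x y t <= M.
Proof.
move=> [[p0 Op0] [oOmega [_ [bOmega [rho rhoOmega]]]]] T0 fC21 fcont fneu d0 lam0 mu0 fsub.
have cOmega := bounded_closure_compact bOmega.
have nOmega : closure Omega !=set0 by exists p0; exact: subset_closure.
have rho_smooth := rhoOmega.1.
have [R0 R00 rhoR0] := compact_continuous_bounded nOmega cOmega
  (continuous_subspaceT (rho_smooth [::]).2).
have lap_rho_c : continuous (fun p : R * R => dx (dx rho) p.1 p.2 + dy (dy rho) p.1 p.2).
  move=> p; apply: cvgD; first exact: (rho_smooth [:: true; true]).2.
  exact: (rho_smooth [:: false; false]).2.
have [L L0 lapL] := compact_continuous_bounded nOmega cOmega (continuous_subspaceT lap_rho_c).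
have to_Qcl0 : (fun p => (p, 0)) @` closure Omega `<=` Qcl0 Omega T.
  by move=> _ [p cp <-]; split; [|split].
have [B0 B00 fB0] := compact_continuous_bounded nOmega cOmega
  (continuous_within_comp (continuous_pairl 0) to_Qcl0 fcont).
exists (Num.max B0 (lam / mu)) => [|x y t [Oxy [t0 tT]]]; first by rewrite le_max B00.
apply/ler_addgt0Pr => e e0.
have dLt0 : 0 <= d * L * t by rewrite !mulr_ge0 // ltW.
pose eps := e / (R0 + d * L * t + 1).
have eps0 : 0 < eps by rewrite divr_gt0 //; lra.
apply: le_trans (perturbed_max_bound (K := d * L) (R0 := R0) (B0 := B0) fC21 rhoOmega oOmega
  fcont fneu d0 lam0 mu0 eps0 (mulr_ge0 (ltW d0) L0) fsub _ _ _ cOmega (subset_closure Oxy)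
  (ltW t0) tT) _.
- move=> p cp; rewrite ler_pM2l //.
  by apply: le_trans (lapL p cp); exact: ler_norm.
- by move=> p cp; apply: le_trans (rhoR0 p cp); rewrite -normrN ler_norm.
- by move=> p cp; apply: le_trans (fB0 p cp); exact: ler_norm.
rewrite lerD2l /eps mulrAC ler_pdivrMr; last lra.
by rewrite ler_pM2l //=; lra.
Qed.

Unset Implicit Arguments.

Theorem lemma3p1 (R : realType) (Omega : set (R * R))
  (d1 d2 d3 chi l1 l2 l3 m1 m2 m3 a1 a2 a3 b1 b2 b3 : R)
  (u0 v0 w0 : R -> R -> R) (T : \bar R) (u v w : R -> R -> R -> R) :
  smooth_bounded_domain Omega ->
  0 < d1 -> 0 < d2 -> 0 < d3 -> 0 < chi ->
  0 < l1 -> 0 < l2 -> 0 < l3 -> 0 < m1 -> 0 < m2 -> 0 < m3 ->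
  0 < a1 -> 0 < a2 -> 0 < a3 -> 0 < b1 -> 0 < b2 -> 0 < b3 ->
  (forall p : R * R, closure Omega p ->
     0 <= u0 p.1 p.2 /\ 0 <= v0 p.1 p.2 /\ 0 <= w0 p.1 p.2) ->
  (exists theta : R, 2 < theta /\ W1 Omega theta u0 /\ W1 Omega theta v0) ->
  {within closure Omega, continuous (uncurry2 w0)} ->
  (0 < T)%E ->
  is_maximal_solution Omega d1 d2 d3 chi l1 l2 l3 m1 m2 m3 a1 a2 a3 b1 b2 b3
    u0 v0 w0 T u v w ->
  (forall x y t, Qcl0 Omega T ((x, y), t) ->
     0 <= u x y t /\ 0 <= v x y t /\ 0 <= w x y t) ->
  exists C : R, 0 < C /\
    forall x y t, Qint Omega T ((x, y), t) ->
      `|u x y t| <= C /\ `|v x y t| <= C.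
Proof.
move=> Omega_sbd d10 d20 _ _ l10 l20 _ m10 m20 _ a10 a20 a30 b10 _ _ _ _ _ T0 [sol _] nonneg.
have [uC21 [vC21 [_ [ucont [vcont [_ [_ [pde [uneu [vneu _]]]]]]]]]] := sol.
have {}nonneg x y t : Qint Omega T ((x, y), t) ->
    0 <= u x y t /\ 0 <= v x y t /\ 0 <= w x y t.
  by move=> [Oxy [t0 tT]]; apply: nonneg; split; [exact: subset_closure | split => //; exact: ltW].
have urate x y t : Qint Omega T ((x, y), t) ->
    l1 - m1 * u x y t - a1 * v x y t - a2 * w x y t <= l1 - m1 * u x y t.
  move=> Q; have [_ [vn wn]] := nonneg x y t Q.
  have := mulr_ge0 (ltW a10) vn; have := mulr_ge0 (ltW a20) wn; lra.
have [Mu Mu0 uMu] := logistic_max_principle Omega_sbd T0 uC21 ucont uneu d10 (ltW l10) m10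
  (logistic_subsolution_of_rate
    (fun x y t Q => (nonneg x y t Q).1) (fun x y t Q => (pde x y t Q).1) urate).
have vrate x y t : Qint Omega T ((x, y), t) ->
    l2 - m2 * v x y t + b1 * u x y t - a3 * w x y t <= l2 + b1 * Mu - m2 * v x y t.
  move=> Q; have [_ [_ wn]] := nonneg x y t Q.
  have := ler_wpM2l (ltW b10) (uMu x y t Q); have := mulr_ge0 (ltW a30) wn; lra.
have lam2 : 0 <= l2 + b1 * Mu by have := mulr_ge0 (ltW b10) Mu0; lra.
have [Mv Mv0 vMv] := logistic_max_principle Omega_sbd T0 vC21 vcont vneu d20 lam2 m20
  (logistic_subsolution_of_rate
    (fun x y t Q => (nonneg x y t Q).2.1) (fun x y t Q => (pde x y t Q).2.1) vrate).
exists (Mu + Mv + 1); split; first lra.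
move=> x y t Q; have [un [vn _]] := nonneg x y t Q.
have := uMu x y t Q; have := vMv x y t Q.
by rewrite !ger0_norm //; lra.
Qed.
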